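(* Let $X$ be a compact metric space and let $f\colon X\to X$ be an inner-distal homeomorphism. If every proximal cell $\mathcal{P}(x)$, $x\in X$, is a meagre subset of $X$, then the set of almost periodic points of $f$ is uncountable and $f$ has uncountably many stable classes.
   Context: The proximal cell of $x$ is $\mathcal{P}(x)=\{y\in X\colon \inf_{n\in\mathbb{Z}} d(f^n(x),f^n(y))=0\}$; $f$ is inner-distal if $\operatorname{Int}\mathcal{P}(x)=\emptyset$ for all $x$. A set is meagre if it is a countable union of nowhere-dense sets (sets whose closure has empty interior). A set $A\subseteq\mathbb{Z}$ is syndetic if $A+F=\mathbb{Z}$ for some finite $F\subseteq\mathbb{Z}$. A point $x$ is (pointwise) almost periodic if for every open neighborhood $U$ of $x$ the set $\{n\in\mathbb{Z}\colon f^n(x)\in U\}$ is syndetic. A stable class is a set of the form $W^s(x)=\{y\in X\colon \lim_{n\to\infty}d(f^n(x),f^n(y))=0\}$ for some $x\in X$. *)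

From Stdlib Require Import Reals ZArith List.
Open Scope R_scope.

Section MetricDefs.
Context {X : Type} (d : X -> X -> R).

Definition is_metric : Prop :=
  (forall x y, 0 <= d x y) /\
  (forall x y, d x y = 0 <-> x = y) /\
  (forall x y, d x y = d y x) /\
  (forall x y z, d x z <= d x y + d y z).

Definition ball (x : X) (r : R) : X -> Prop := fun y => d x y < r.

Definition is_open (U : X -> Prop) : Prop :=
  forall x, U x -> exists r, 0 < r /\ forall y, ball x r y -> U y.

Definition closure (A : X -> Prop) : X -> Prop :=
  fun x => forall r, 0 < r -> exists y, ball x r y /\ A y.

Definition interior (A : X -> Prop) : X -> Prop :=
  fun x => exists r, 0 < r /\ forall y, ball x r y -> A y.

Definition nowhere_dense (A : X -> Prop) : Prop :=
  ~ (exists x, interior (closure A) x).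

Definition meagre (A : X -> Prop) : Prop :=
  exists N : nat -> X -> Prop, (forall n, nowhere_dense (N n)) /\
    (forall x, A x <-> exists n, N n x).

Definition compact_space : Prop :=
  forall (I : Type) (U : I -> X -> Prop),
    (forall i, is_open (U i)) -> (forall x, exists i, U i x) ->
    exists l : list I, forall x, exists i, In i l /\ U i x.

Definition continuous_map (f : X -> X) : Prop :=
  forall x eps, 0 < eps -> exists delta, 0 < delta /\
    forall y, d x y < delta -> d (f x) (f y) < eps.

Definition homeomorphism (f g : X -> X) : Prop :=
  (forall x, g (f x) = x) /\ (forall x, f (g x) = x) /\
  continuous_map f /\ continuous_map g.

End MetricDefs.

Definition iterz {X : Type} (f g : X -> X) (n : Z) : X -> X :=
  match n with
  | Z0 => fun x => x
  | Zpos p => Nat.iter (Pos.to_nat p) f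
  | Zneg p => Nat.iter (Pos.to_nat p) g
  end.

(* proximal cell: inf_{n in Z} d(f^n x, f^n y) = 0 (d >= 0) *)
Definition proximal_cell {X : Type} (d : X -> X -> R) (f g : X -> X) (x : X)
  : X -> Prop :=
  fun y => forall eps, 0 < eps ->
    exists n : Z, d (iterz f g n x) (iterz f g n y) < eps.

Definition inner_distal {X : Type} (d : X -> X -> R) (f g : X -> X) : Prop :=
  forall x, ~ (exists z, interior d (proximal_cell d f g x) z).

Definition syndetic (A : Z -> Prop) : Prop :=
  exists F : list Z, forall m : Z, exists a k, A a /\ In k F /\ m = (a + k)%Z.

Definition almost_periodic {X : Type} (d : X -> X -> R) (f g : X -> X) (x : X)
  : Prop :=
  forall U : X -> Prop, is_open d U -> U x ->
    syndetic (fun n => U (iterz f g n x)).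

Definition stable_class {X : Type} (d : X -> X -> R) (f : X -> X) (x : X)
  : X -> Prop :=
  fun y => Un_cv (fun n => d (Nat.iter n f x) (Nat.iter n f y)) 0.

Definition countable_set {T : Type} (A : T -> Prop) : Prop :=
  exists h : T -> nat, forall a b, A a -> A b -> h a = h b -> a = b.

(* the family of stable classes is countable: there is a labelling of points
   by naturals such that equal labels give the same stable class *)
Definition countably_many_stable_classes {X : Type} (d : X -> X -> R)
  (f : X -> X) : Prop :=
  exists h : X -> nat, forall x y, h x = h y ->
    forall z, stable_class d f x z <-> stable_class d f y z.

From Stdlib Require Import Reals ZArith List Lia Lra Classical ClassicalEpsilon
  FunctionalExtensionality PropExtensionality Cantor.
From mathcomp Require classical_sets.
Open Scope R_scope.

(* If the almost periodic points were countable, take a minimal subset M of the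
   orbit closure of any x. Its points are almost periodic, so M is a countable
   compact set and by Baire has an isolated point; an isolated almost periodic
   point is periodic, and some point of a periodic orbit lying in the orbit closure
   of x is proximal to x. Thus X would be the union of countably many proximal
   cells, each meagre, against the Baire category theorem. The stable class of w
   lies in the proximal cell of w, so countably many stable classes lead to the
   same contradiction. *)

Section MetricSpace.
Variables (X : Type) (d : X -> X -> R).
Hypothesis d_metric : is_metric d.

Lemma dist_ge0 x y : 0 <= d x y.
Proof. apply d_metric. Qed.

Lemma dist_eq0 x y : d x y = 0 -> x = y.
Proof. apply d_metric. Qed.

Lemma dist_xx x : d x x = 0.
Proof. apply d_metric; reflexivity. Qed.

Lemma dist_sym x y : d x y = d y x.
Proof. apply d_metric. Qed.

Lemma dist_triangle x y z : d x z <= d x y + d y z.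
Proof. apply d_metric. Qed.

Definition closed (C : X -> Prop) : Prop := forall y, closure d C y -> C y.

Lemma closure_subset (A : X -> Prop) x : A x -> closure d A x.
Proof. intros Ax r Hr; exists x; split; [unfold ball; rewrite dist_xx|]; auto. Qed.

Lemma closed_closure A : closed (closure d A).
Proof.
  intros y H r Hr.
  destruct (H (r / 2)) as [c [Hyc Hc]]; [lra|].
  destruct (Hc (r / 2)) as [a [Hca Ha]]; [lra|].
  exists a; split; auto. unfold ball in *.
  pose proof (dist_triangle y c a); lra.
Qed.

Lemma is_open_compl C : closed C -> is_open d (fun y => ~ C y).
Proof.
  intros HC y Hy. apply NNPP; intro Hno. apply Hy, HC. intros r Hr.
  apply NNPP; intro Hfar. apply Hno. exists r; split; auto.
  intros z Hz Cz. apply Hfar. exists z; auto.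
Qed.

Lemma closed_compl U : is_open d U -> closed (fun y => ~ U y).
Proof.
  intros HU y Hy Uy. destruct (HU y Uy) as [r [Hr Hball]].
  destruct (Hy r Hr) as [c [Hyc Hc]]. exact (Hc (Hball c Hyc)).
Qed.

Lemma closed_forall (I : Type) (F : I -> X -> Prop) :
  (forall i, closed (F i)) -> closed (fun y => forall i, F i y).
Proof.
  intros HF y Hy i. apply HF. intros r Hr.
  destruct (Hy r Hr) as [c [Hyc Hc]]; eauto.
Qed.

Lemma closed_and A B : closed A -> closed B -> closed (fun y => A y /\ B y).
Proof.
  intros HA HB y Hy; split; [apply HA | apply HB]; intros r Hr;
    destruct (Hy r Hr) as [c [Hyc [Ac Bc]]]; eauto.
Qed.

Lemma closed_cball z r : closed (fun y => d z y <= r).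
Proof.
  intros y Hy. apply Rle_plus_epsilon. intros e He.
  destruct (Hy e He) as [c [Hyc Hc]]. unfold ball in Hyc.
  pose proof (dist_triangle z c y). rewrite (dist_sym c y) in *. lra.
Qed.

Lemma closed_subsingleton (S : X -> Prop) :
  (forall a b, S a -> S b -> a = b) -> closed S.
Proof.
  intros Huniq y Hy. destruct (Hy 1) as [c [_ Sc]]; [lra|].
  replace y with c; auto. symmetry. apply dist_eq0, Rle_antisym; [|apply dist_ge0].
  apply Rle_plus_epsilon. intros e He.
  destruct (Hy e He) as [c' [Hyc' Sc']]. rewrite (Huniq c c'); auto.
  unfold ball in Hyc'. lra.
Qed.

Lemma is_open_ball z r : is_open d (fun y => d z y < r).
Proof.
  intros y Hy. exists (r - d z y); split; [lra|].
  intros w Hw. unfold ball in Hw. pose proof (dist_triangle z y w). lra.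
Qed.

Hypothesis X_compact : compact_space d.

Lemma finite_chain_least (I : Type) (S : I -> X -> Prop) (l : list I) (i0 : I) :
  In i0 l ->
  (forall i j, (forall y, S i y -> S j y) \/ (forall y, S j y -> S i y)) ->
  exists i, In i l /\ forall j, In j l -> forall y, S i y -> S j y.
Proof.
  intros Hi0 Hchain. revert i0 Hi0.
  induction l as [|a l IH]; intros i0 Hi0; [destruct Hi0|].
  destruct l as [|b l].
  - exists a; split; [left; auto|]. intros j [<-|[]] y Hy; auto.
  - destruct (IH b (or_introl eq_refl)) as [m [Hm Hleast]].
    destruct (Hchain a m) as [Ham|Hma].
    + exists a; split; [left; auto|]. intros j [<-|Hj] y Hy; auto.
    + exists m; split; [right; auto|]. intros j [<-|Hj] y Hy; auto.
Qed.

Lemma chain_closed_inter (I : Type) (S : I -> X -> Prop) (i0 : I) :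
  (forall i, closed (S i)) -> (forall i, exists y, S i y) ->
  (forall i j, (forall y, S i y -> S j y) \/ (forall y, S j y -> S i y)) ->
  exists y, forall i, S i y.
Proof.
  intros HS Hne Hchain. apply NNPP; intro Hempty.
  assert (Hcover : forall y, exists i, ~ S i y).
  { intro y. apply NNPP; intro Hy. apply Hempty. exists y. intro i.
    apply NNPP; intro Hi; apply Hy; eauto. }
  destruct (X_compact I (fun i y => ~ S i y) (fun i => is_open_compl _ (HS i)) Hcover)
    as [l Hl].
  destruct (Hne i0) as [y0 _]. destruct (Hl y0) as [i1 [Hi1 _]].
  destruct (finite_chain_least I S l i1 Hi1 Hchain) as [m [Hm Hleast]].
  destruct (Hne m) as [y Hy]. destruct (Hl y) as [j [Hj Hjy]].
  exact (Hjy (Hleast j Hj y Hy)).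
Qed.

Lemma nested_closed_inter (F : nat -> X -> Prop) :
  (forall n, closed (F n)) -> (forall n y, F (S n) y -> F n y) ->
  (forall n, exists y, F n y) -> exists y, forall n, F n y.
Proof.
  intros HF Hnest Hne. apply (chain_closed_inter nat F 0%nat); auto.
  assert (Hmono : forall i j, (i <= j)%nat -> forall y, F j y -> F i y).
  { intros i j Hij; induction Hij; auto. }
  intros i j. destruct (Nat.le_ge_cases i j) as [Hij|Hji]; [right|left]; apply Hmono; auto.
Qed.

Lemma baire_shrink (K C : X -> Prop) z r :
  closed C -> (exists y, K y /\ d z y < r / 2 /\ ~ C y) ->
  exists z' r', K z' /\ 0 < r' /\ r' <= r / 2 /\ d z z' < r / 2 /\
    forall y, d z' y <= r' -> ~ C y.
Proof.
  intros HC [y [Ky [Hzy Cy]]].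
  destruct (is_open_compl C HC y Cy) as [rho [Hrho Hball]].
  assert (Hpos : 0 < r / 2) by (pose proof (dist_ge0 z y); lra).
  exists y, (Rmin (rho / 2) (r / 2)).
  repeat split; auto; [apply Rmin_glb_lt; lra | apply Rmin_r |].
  intros w Hw. apply Hball. unfold ball. pose proof (Rmin_l (rho / 2) (r / 2)). lra.
Qed.

Lemma shrinking_balls (K : X -> Prop) (C : nat -> X -> Prop) z0 :
  K z0 ->
  (forall n z r, K z -> 0 < r -> exists z' r', K z' /\ 0 < r' /\ r' <= r / 2 /\
     d z z' < r / 2 /\ forall y, d z' y <= r' -> ~ C n y) ->
  exists (c : nat -> X) (rad : nat -> R), forall n,
    K (c n) /\ 0 < rad n /\ rad (S n) <= rad n / 2 /\ d (c n) (c (S n)) < rad n / 2 /\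
    forall y, d (c (S n)) y <= rad (S n) -> ~ C n y.
Proof.
  intros Kz0 Hshrink.
  assert (Hstep : forall np : nat * (X * R), exists q : X * R,
    let '(n, (z, r)) := np in K z -> 0 < r ->
    K (fst q) /\ 0 < snd q /\ snd q <= r / 2 /\ d z (fst q) < r / 2 /\
    forall y, d (fst q) y <= snd q -> ~ C n y).
  { intros [n [z r]]. destruct (classic (K z /\ 0 < r)) as [[Kz Hr]|Hbad].
    - destruct (Hshrink n z r Kz Hr) as [z' [r' Hzr']]. exists (z', r'); auto.
    - exists (z, r); intros Kz Hr; tauto. }
  destruct (choice _ Hstep) as [step Hspec].
  set (seq := fix seq n := match n with O => (z0, 1) | S n => step (n, seq n) end).
  assert (Hseq0 : seq O = (z0, 1)) by reflexivity.
  assert (HseqS : forall n, seq (S n) = step (n, seq n)) by reflexivity.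
  clearbody seq.
  assert (Hinv : forall n, K (fst (seq n)) /\ 0 < snd (seq n)).
  { induction n as [|n [Kz Hr]]; [rewrite Hseq0; simpl; split; [auto | lra]|].
    rewrite HseqS. specialize (Hspec (n, seq n)).
    destruct (seq n) as [z r]. destruct (Hspec Kz Hr) as [? [? _]]; auto. }
  exists (fun n => fst (seq n)), (fun n => snd (seq n)). intro n.
  destruct (Hinv n) as [Kz Hr]. split; [|split]; auto.
  rewrite HseqS. specialize (Hspec (n, seq n)).
  destruct (seq n) as [z r]. destruct (Hspec Kz Hr) as [_ [_ H]]; exact H.
Qed.

Lemma baire (K : X -> Prop) (C : nat -> X -> Prop) :
  (exists z, K z) -> closed K -> (forall n, closed (C n)) ->
  (forall y, K y -> exists n, C n y) ->
  exists n z r, K z /\ 0 < r /\ forall y, K y -> d z y < r -> C n y.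
Proof.
  intros [z0 Kz0] HK HC Hcover. apply NNPP; intro Hno.
  destruct (shrinking_balls K C z0 Kz0) as [c [rad Hball]].
  { intros n z r Kz Hr. apply baire_shrink; auto.
    apply NNPP; intro Hin. apply Hno. exists n, z, (r / 2).
    split; [|split]; auto; [lra|]. intros y Ky Hy.
    apply NNPP; intro Cy. apply Hin. eauto. }
  destruct (nested_closed_inter (fun n y => K y /\ d (c n) y <= rad n)) as [y Hy].
  - intro n. apply closed_and; auto. apply closed_cball.
  - intros n y [Ky Hy]. split; auto. destruct (Hball n) as [_ [_ [Hr' [Hcc' _]]]].
    pose proof (dist_triangle (c n) (c (S n)) y). lra.
  - intro n. exists (c n). destruct (Hball n) as [Kc [Hr _]].
    rewrite dist_xx. split; auto; lra.
  - destruct (Hy O) as [Ky _]. destruct (Hcover y Ky) as [n Cn].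
    destruct (Hball n) as [_ [_ [_ [_ Hout]]]]. exact (Hout y (proj2 (Hy (S n))) Cn).
Qed.

Lemma compact_not_meagre_union (A : nat -> X -> Prop) :
  inhabited X -> (forall k, meagre d (A k)) -> ~ (forall x, exists k, A k x).
Proof.
  intros [x0] Hmeagre Hcover.
  destruct (choice _ Hmeagre) as [N HN].
  destruct (baire (fun _ => True)
    (fun n => closure d (N (fst (of_nat n)) (snd (of_nat n))))) as [n [z [r [_ [Hr Hball]]]]].
  - exists x0; auto.
  - intros y _; auto.
  - intro n. apply closed_closure.
  - intros y _. destruct (Hcover y) as [k Hk].
    destruct (proj1 (proj2 (HN k) y) Hk) as [j Hj].
    exists (to_nat (k, j)). rewrite cancel_of_to. apply closure_subset, Hj.
  - apply (proj1 (HN (fst (of_nat n))) (snd (of_nat n))).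
    exists z, r; split; auto.
Qed.

Lemma countable_closed_isolated (K : X -> Prop) :
  (exists z, K z) -> closed K -> countable_set K ->
  exists z r, K z /\ 0 < r /\ forall y, K y -> d z y < r -> y = z.
Proof.
  intros Hne HK [h Hinj].
  destruct (baire K (fun k y => K y /\ h y = k)) as [k [z [r [Kz [Hr Hball]]]]]; auto.
  - intro k. apply closed_subsingleton. intros a b [Ka ha] [Kb hb].
    apply Hinj; congruence.
  - intros y Ky. exists (h y); auto.
  - exists z, r; repeat split; auto. intros y Ky Hy.
    assert (Hz : d z z < r) by (rewrite dist_xx; lra).
    apply Hinj; auto. rewrite (proj2 (Hball y Ky Hy)), (proj2 (Hball z Kz Hz)); auto.
Qed.

End MetricSpace.

Section Iterates.
Variables (X : Type) (f g : X -> X).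
Hypotheses (gf : forall x, g (f x) = x) (fg : forall x, f (g x) = x).

Lemma iterz_nat k y : iterz f g (Z.of_nat k) y = Nat.iter k f y.
Proof. destruct k; simpl; auto. rewrite SuccNat2Pos.id_succ; reflexivity. Qed.

Lemma iterz_opp_nat k y : iterz f g (- Z.of_nat k) y = Nat.iter k g y.
Proof. destruct k; simpl; auto. rewrite SuccNat2Pos.id_succ; reflexivity. Qed.

Lemma Z_nat_cases (n : Z) :
  (exists k, n = Z.of_nat k) \/ (exists k, n = (- Z.of_nat (S k))%Z).
Proof.
  destruct (Z_le_gt_dec 0 n).
  - left; exists (Z.to_nat n); lia.
  - right; exists (Z.to_nat (- n) - 1)%nat; lia.
Qed.

Lemma iterz_ind (P : X -> Prop) :
  (forall y, P y -> P (f y)) -> (forall y, P y -> P (g y)) ->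
  forall n y, P y -> P (iterz f g n y).
Proof.
  intros Hf Hg n y Hy. destruct (Z_nat_cases n) as [[k ->]|[k ->]].
  - rewrite iterz_nat. induction k; simpl; auto.
  - rewrite iterz_opp_nat. induction (S k); simpl; auto.
Qed.

Lemma iterz_succ m y : f (iterz f g m y) = iterz f g (m + 1) y.
Proof.
  destruct (Z_nat_cases m) as [[k ->]|[k ->]].
  - replace (Z.of_nat k + 1)%Z with (Z.of_nat (S k)) by lia.
    rewrite !iterz_nat; reflexivity.
  - replace (- Z.of_nat (S k) + 1)%Z with (- Z.of_nat k)%Z by lia.
    rewrite !iterz_opp_nat; simpl; auto.
Qed.

Lemma iterz_pred m y : g (iterz f g m y) = iterz f g (m - 1) y.
Proof.
  destruct (Z_nat_cases m) as [[[|k] ->]|[k ->]].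
  - reflexivity.
  - replace (Z.of_nat (S k) - 1)%Z with (Z.of_nat k) by lia.
    rewrite !iterz_nat; simpl; auto.
  - replace (- Z.of_nat (S k) - 1)%Z with (- Z.of_nat (S (S k)))%Z by lia.
    rewrite !iterz_opp_nat; reflexivity.
Qed.

Lemma iterz_add n m y : iterz f g n (iterz f g m y) = iterz f g (n + m) y.
Proof.
  destruct (Z_nat_cases n) as [[k ->]|[k ->]].
  - rewrite iterz_nat. induction k as [|k IH]; [reflexivity|].
    simpl Nat.iter. rewrite IH, iterz_succ. f_equal; lia.
  - rewrite iterz_opp_nat. induction (S k) as [|j IH]; [reflexivity|].
    simpl Nat.iter. rewrite IH, iterz_pred. f_equal; lia.
Qed.

Lemma iterz_periodic a z : iterz f g a z = z -> forall k, iterz f g (a * k) z = z.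
Proof.
  intros Ha.
  assert (Hnat : forall k, iterz f g (a * Z.of_nat k) z = z).
  { induction k as [|k IH]; [rewrite Z.mul_0_r; reflexivity|].
    replace (a * Z.of_nat (S k))%Z with (a + a * Z.of_nat k)%Z by lia.
    rewrite <- iterz_add, IH; auto. }
  intro k. destruct (Z_nat_cases k) as [[j ->]|[j ->]]; auto.
  rewrite <- (Hnat (S j)) at 1. rewrite iterz_add.
  replace (a * - Z.of_nat (S j) + a * Z.of_nat (S j))%Z with 0%Z by lia.
  reflexivity.
Qed.

End Iterates.

Lemma syndetic_pos (A : Z -> Prop) : syndetic A -> exists a, (0 < a)%Z /\ A a.
Proof.
  intros [F HF].
  assert (Hbound : exists B, forall k, In k F -> (k <= B)%Z).
  { clear HF. induction F as [|k F [B HB]]; [exists 0%Z; intros _ []|].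
    exists (Z.max k B). intros j [<-|Hj]; [lia|]. specialize (HB j Hj); lia. }
  destruct Hbound as [B HB]. destruct (HF (B + 1)%Z) as [a [k [Aa [Hk Heq]]]].
  specialize (HB k Hk). exists a; split; auto; lia.
Qed.

Lemma common_radius (Q : Z -> R -> Prop) :
  (forall j e e', Q j e -> 0 < e' <= e -> Q j e') ->
  forall N : nat, (forall j, (0 <= j < Z.of_nat N)%Z -> exists e, 0 < e /\ Q j e) ->
  exists e, 0 < e /\ forall j, (0 <= j < Z.of_nat N)%Z -> Q j e.
Proof.
  intros Hmono N. induction N as [|N IH]; intros H.
  - exists 1; split; [lra|]. intros j Hj; lia.
  - destruct IH as [e1 [He1 H1]]; [intros j Hj; apply H; lia|].
    destruct (H (Z.of_nat N)) as [e2 [He2 H2]]; [lia|].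
    assert (Hmin : 0 < Rmin e1 e2) by (apply Rmin_glb_lt; auto).
    exists (Rmin e1 e2); split; auto.
    intros j Hj. destruct (Z.eq_dec j (Z.of_nat N)) as [->|Hne].
    + apply (Hmono _ e2); auto. split; [auto | apply Rmin_r].
    + apply (Hmono _ e1); [apply H1; lia|]. split; [auto | apply Rmin_l].
Qed.

Section Dynamics.
Variables (X : Type) (d : X -> X -> R) (f g : X -> X).
Hypotheses (d_metric : is_metric d) (X_compact : compact_space d)
  (fg_homeo : homeomorphism d f g).

Let gf x : g (f x) = x. Proof. apply fg_homeo. Qed.
Let fg x : f (g x) = x. Proof. apply fg_homeo. Qed.

Lemma continuous_iterz n : continuous_map d (iterz f g n).
Proof.
  assert (Hiter : forall h k, continuous_map d h -> continuous_map d (Nat.iter k h)).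
  { intros h k Ch. induction k as [|k IH]; simpl; intros x e He.
    - exists e; split; auto.
    - destruct (Ch (Nat.iter k h x) e He) as [e1 [He1 H1]].
      destruct (IH x e1 He1) as [e2 [He2 H2]]. exists e2; split; auto.
      intros y Hy. apply H1, H2, Hy. }
  destruct fg_homeo as [_ [_ [Cf Cg]]].
  destruct n; simpl; auto. intros x e He; exists e; split; auto.
Qed.

Lemma is_open_iterz_preimage U n : is_open d U -> is_open d (fun z => U (iterz f g n z)).
Proof.
  intros HU z Hz. destruct (HU _ Hz) as [r [Hr Hball]].
  destruct (continuous_iterz n z r Hr) as [e [He H]]. exists e; split; auto.
  intros y Hy. apply Hball, H, Hy.
Qed.

Definition invariant_closed (S : X -> Prop) : Prop :=
  (exists y, S y) /\ closed X d S /\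
  (forall y, S y -> S (f y)) /\ (forall y, S y -> S (g y)).

Definition minimal_set (M : X -> Prop) : Prop :=
  invariant_closed M /\
  forall S, invariant_closed S -> (forall y, S y -> M y) -> forall y, M y -> S y.

Lemma invariant_closed_chain_inter (I : Type) (S : I -> X -> Prop) (i0 : I) :
  (forall i, invariant_closed (S i)) ->
  (forall i j, (forall y, S i y -> S j y) \/ (forall y, S j y -> S i y)) ->
  invariant_closed (fun y => forall i, S i y).
Proof.
  intros HS Hchain. split; [|split; [|split]].
  - apply (chain_closed_inter X d X_compact I S i0); auto; apply HS.
  - apply closed_forall; apply HS.
  - intros y Hy i. apply (HS i), Hy.
  - intros y Hy i. apply (HS i), Hy.
Qed.

(* Zorn's lemma is applied to the sets [B] whose complement in [K] is invariant
   and closed, ordered by inclusion. *)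
Lemma minimal_subset_exists K :
  invariant_closed K -> exists M, minimal_set M /\ forall y, M y -> K y.
Proof.
  intros HK.
  destruct (classical_sets.Zorn_bigcup
    (P := fun B => invariant_closed (fun x => K x /\ ~ B x))) as [A [HA Amax]].
  - intros F HF Fchain.
    set (T := fun o : option {B | F B} => fun x =>
      K x /\ match o with Some B => ~ proj1_sig B x | None => True end).
    match goal with |- invariant_closed ?P => replace P with (fun x => forall o, T o x) end.
    + apply (invariant_closed_chain_inter _ T None).
      * intros [[B FB]|]; [apply (HF B FB)|].
        unfold T. replace (fun x => K x /\ True) with K; auto.
        apply functional_extensionality; intro; apply propositional_extensionality; tauto.
      * intros [[B1 F1]|] [[B2 F2]|]; unfold T; simpl;
          try (left; tauto); try (right; tauto).
        destruct (Fchain B1 B2 F1 F2) as [H|H]; [right|left];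
          intros y [Ky Hy]; split; auto.
    + apply functional_extensionality; intro x; apply propositional_extensionality.
      unfold T; split.
      * intros Hx. split; [apply (Hx None)|]. intros [B FB HB].
        apply (proj2 (Hx (Some (exist _ B FB))) HB).
      * intros [Kx Hx] [[B FB]|]; split; auto. intro HB. apply Hx. exists B; auto.
  - exists (fun x => K x /\ ~ A x). split; [split; auto|]; [|intros y []; auto].
    intros S HS Hsub y [Ky Ay]. apply NNPP; intro Sy.
    apply (Amax (fun x => ~ S x)).
    + split; [intros t At St; apply (Hsub t St), At|].
      intro Hsub'. exact (Ay (Hsub' y Sy)).
    + replace (fun x => K x /\ ~ ~ S x) with S; auto.
      apply functional_extensionality; intro x; apply propositional_extensionality.
      split; [intro Sx; split; [apply (Hsub x Sx) | tauto] | intros [_ Sx]; tauto].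
Qed.

Lemma minimal_set_visits M U y :
  minimal_set M -> is_open d U -> M y -> U y ->
  forall z, M z -> exists n, U (iterz f g n z).
Proof.
  intros [[_ [HMc [HMf HMg]]] Hmin] HU My Uy. apply NNPP; intro Hno.
  set (S := fun z => M z /\ forall n, ~ U (iterz f g n z)).
  assert (HS : invariant_closed S).
  { split; [|split; [|split]].
    - apply NNPP; intro Hempty. apply Hno. intros z Mz. apply NNPP; intro Hz.
      apply Hempty. exists z; split; auto. intros n Un; eauto.
    - apply closed_and; auto. apply closed_forall. intro n.
      apply closed_compl, is_open_iterz_preimage, HU.
    - intros z [Mz Hz]. split; auto. intro n.
      change (f z) with (iterz f g 1 z). rewrite (iterz_add X f g gf fg); auto.
    - intros z [Mz Hz]. split; auto. intro n.
      change (g z) with (iterz f g (-1) z). rewrite (iterz_add X f g gf fg); auto. }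
  destruct (Hmin S HS (fun z Hz => proj1 Hz) y My) as [_ Hy]. exact (Hy 0%Z Uy).
Qed.

(* A finite subcover of [~ M] and the preimages [f^-n U] gives the finite set of
   return-time shifts. *)
Lemma minimal_set_almost_periodic M y :
  minimal_set M -> M y -> almost_periodic d f g y.
Proof.
  intros HM My U HU Uy.
  pose proof HM as [[_ [HMc [HMf HMg]]] _].
  destruct (X_compact (option Z)
    (fun o z => match o with None => ~ M z | Some n => U (iterz f g n z) end))
    as [l Hl].
  - intros [n|]; [apply is_open_iterz_preimage, HU | apply is_open_compl; auto].
  - intro z. destruct (classic (M z)) as [Mz|nMz]; [|exists None; auto].
    destruct (minimal_set_visits M U y HM HU My Uy z Mz) as [n Hn].
    exists (Some n); auto.
  - exists (map (fun o => match o with Some n => (- n)%Z | None => 0%Z end) l).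
    intro m. assert (Mm : M (iterz f g m y)) by (apply (iterz_ind X f g); auto).
    destruct (Hl (iterz f g m y)) as [[n|] [Hin Hu]]; [|contradiction].
    exists (n + m)%Z, (- n)%Z. rewrite <- (iterz_add X f g gf fg).
    split; [auto | split; [apply in_map_iff; exists (Some n); auto | lia]].
Qed.

Lemma almost_periodic_isolated_periodic (M : X -> Prop) z r :
  (forall y, M y -> M (f y)) -> (forall y, M y -> M (g y)) ->
  M z -> almost_periodic d f g z -> 0 < r ->
  (forall y, M y -> d z y < r -> y = z) ->
  exists a, (0 < a)%Z /\ iterz f g a z = z.
Proof.
  intros HMf HMg Mz Hap Hr Hisolated.
  assert (Hzz : d z z < r) by (rewrite (dist_xx X d d_metric); exact Hr).
  destruct (syndetic_pos _ (Hap _ (is_open_ball X d d_metric z r) Hzz)) as [a [Ha Hret]].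
  exists a; split; auto. apply Hisolated; auto. apply (iterz_ind X f g M); auto.
Qed.

Definition orbit_closure (x : X) : X -> Prop :=
  closure d (fun y => exists n, y = iterz f g n x).

Lemma invariant_closed_orbit_closure x : invariant_closed (orbit_closure x).
Proof.
  destruct fg_homeo as [_ [_ [Cf Cg]]].
  split; [|split; [|split]].
  - exists x. apply (closure_subset X d d_metric). exists 0%Z; reflexivity.
  - apply (closed_closure X d d_metric).
  - intros y Hy r Hr. destruct (Cf y r Hr) as [e [He H]].
    destruct (Hy e He) as [c [Hyc [n ->]]]. exists (f (iterz f g n x)).
    split; [apply H, Hyc|]. exists (1 + n)%Z. rewrite <- (iterz_add X f g gf fg); auto.
  - intros y Hy r Hr. destruct (Cg y r Hr) as [e [He H]].
    destruct (Hy e He) as [c [Hyc [n ->]]]. exists (g (iterz f g n x)).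
    split; [apply H, Hyc|]. exists (-1 + n)%Z. rewrite <- (iterz_add X f g gf fg); auto.
Qed.

(* If no point of the periodic orbit of [z] were proximal to [x], a common radius
   [e] would separate all of them from the orbit of [x], yet some [f^n x] comes
   [e]-close to [z] and [z = f^(n+j) z] for [j = -n mod a]. *)
Lemma periodic_orbit_closure_proximal x z a :
  (0 < a)%Z -> iterz f g a z = z -> orbit_closure x z ->
  exists j, (0 <= j < a)%Z /\ proximal_cell d f g (iterz f g j z) x.
Proof.
  intros Ha Hper Hz. apply NNPP; intro Hno.
  destruct (common_radius
    (fun j e => forall n, ~ d (iterz f g n (iterz f g j z)) (iterz f g n x) < e))
    with (N := Z.to_nat a) as [e [He Hsep]].
  - intros j e e' Hq He' n Hn. apply (Hq n). lra.
  - intros j Hj. apply NNPP; intro Hclose. apply Hno. exists j; split; [lia|].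
    intros e He. apply NNPP; intro Hfar. apply Hclose. exists e; split; auto.
    intros n Hn. apply Hfar; eauto.
  - destruct (Hz e He) as [c [Hzc [n ->]]].
    set (j := ((- n) mod a)%Z).
    assert (Hj : (0 <= j < a)%Z) by (apply Z.mod_pos_bound; lia).
    apply (Hsep j ltac:(lia) n).
    rewrite (iterz_add X f g gf fg).
    replace (n + j)%Z with (a * (- ((- n) / a)))%Z
      by (pose proof (Z.div_mod (- n) a ltac:(lia)); unfold j; lia).
    rewrite (iterz_periodic X f g gf fg a z Hper). exact Hzc.
Qed.

Lemma countable_almost_periodic_proximal :
  countable_set (almost_periodic d f g) ->
  forall x, exists q, almost_periodic d f g q /\ proximal_cell d f g q x.
Proof.
  intros [h Hinj] x.
  destruct (minimal_subset_exists (orbit_closure x) (invariant_closed_orbit_closure x))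
    as [M [HM HMx]].
  pose proof HM as [[HMne [HMc [HMf HMg]]] _].
  assert (HMap : forall y, M y -> almost_periodic d f g y)
    by (intros y; apply minimal_set_almost_periodic, HM).
  destruct (countable_closed_isolated X d d_metric X_compact M HMne HMc)
    as [z [r [Mz [Hr Hisolated]]]].
  { exists h. intros a b Ma Mb. apply Hinj; auto. }
  destruct (almost_periodic_isolated_periodic M z r HMf HMg Mz (HMap z Mz) Hr Hisolated)
    as [a [Ha Hper]].
  destruct (periodic_orbit_closure_proximal x z a Ha Hper (HMx z Mz)) as [j [_ Hprox]].
  exists (iterz f g j z). split; auto. apply HMap, (iterz_ind X f g); auto.
Qed.

End Dynamics.

Lemma stable_class_refl (X : Type) (d : X -> X -> R) (f : X -> X) x :
  is_metric d -> stable_class d f x x.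
Proof.
  intros Hm e He. exists O. intros n _. unfold R_dist.
  rewrite (dist_xx X d Hm), Rminus_0_r, Rabs_R0. exact He.
Qed.

Lemma stable_class_proximal (X : Type) (d : X -> X -> R) (f g : X -> X) w z :
  stable_class d f w z -> proximal_cell d f g w z.
Proof.
  intros Hs e He. destruct (Hs e He) as [N HN]. specialize (HN N (le_n _)).
  exists (Z.of_nat N). rewrite !(iterz_nat X f g).
  unfold R_dist in HN. rewrite Rminus_0_r in HN.
  pose proof (Rle_abs (d (Nat.iter N f w) (Nat.iter N f z))). lra.
Qed.

Lemma label_representatives (X : Type) (h : X -> nat) (P : X -> Prop) :
  inhabited X -> exists e : nat -> X, forall x, P x -> P (e (h x)) /\ h (e (h x)) = h x.
Proof.
  intros HX. exists (fun k => epsilon HX (fun q => P q /\ h q = k)).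
  intros x Px. exact (epsilon_spec HX (fun q => P q /\ h q = h x) (ex_intro _ x (conj Px eq_refl))).
Qed.

Theorem theorem2p17 (X : Type) (d : X -> X -> R) (f g : X -> X) :
  is_metric d -> inhabited X -> compact_space d ->
  homeomorphism d f g ->
  inner_distal d f g ->
  (forall x, meagre d (proximal_cell d f g x)) ->
  ~ countable_set (almost_periodic d f g) /\
  ~ countably_many_stable_classes d f.
Proof.
  intros Hm HX Hc Hh _ Hmeagre.
  assert (Hno_cover : forall e : nat -> X, ~ forall z, exists k, proximal_cell d f g (e k) z)
    by (intro e; apply (compact_not_meagre_union X d Hm Hc); auto).
  split.
  - intros Hcount. pose proof Hcount as [h Hinj].
    destruct (label_representatives X h (almost_periodic d f g) HX) as [e He].
    apply (Hno_cover e). intro z.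
    destruct (countable_almost_periodic_proximal X d f g Hm Hc Hh Hcount z)
      as [q [Hq Hprox]].
    exists (h q). destruct (He q Hq) as [Heq Hhq]. rewrite (Hinj _ _ Heq Hq Hhq); exact Hprox.
  - intros [h Hstable].
    destruct (label_representatives X h (fun _ => True) HX) as [e He].
    apply (Hno_cover e). intro z. exists (h z). apply stable_class_proximal.
    apply (Hstable _ _ (proj2 (He z I))), (stable_class_refl X d f z Hm).
Qed.
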